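(* Let $n\ge1$, $r\ge1$ and $1\le k\le n$. Then $\kappa\,\mathcal{S}_{r-1}\Lambda^k(\mathbb{R}^n)\subset\mathcal{S}_r\Lambda^{k-1}(\mathbb{R}^n)$.
   Context: For a multi-index $\alpha\in\mathbb{N}^n$ and $\sigma=\{\sigma(1)<\dots<\sigma(k)\}\subset\{1,\dots,n\}$, the form monomial is $x^\alpha dx_\sigma:=x_1^{\alpha_1}\cdots x_n^{\alpha_n}\,dx_{\sigma(1)}\wedge\cdots\wedge dx_{\sigma(k)}$, of degree $|\alpha|$. $\mathcal{H}_r\Lambda^k(\mathbb{R}^n)$ is the span of form monomials with $|\alpha|=r$, $|\sigma|=k$ ($0$ if $r<0$ or $k\notin\{0,\dots,n\}$), and $\mathcal{P}_r\Lambda^k:=\bigoplus_{j=0}^r\mathcal{H}_j\Lambda^k$. $d$ is the exterior derivative. The Koszul operator is $\kappa(x^\alpha dx_\sigma)=\sum_{i=1}^k(-1)^{i+1}x^\alpha x_{\sigma(i)}\,dx_{\sigma(1)}\wedge\cdots\wedge\widehat{dx_{\sigma(i)}}\wedge\cdots\wedge dx_{\sigma(k)}$, extended linearly. The linear degree is $\mathrm{ldeg}(x^\alpha dx_\sigma):=\#\{i\notin\sigma:\alpha_i=1\}$; $\mathcal{H}_{r,l}\Lambda^k$ is the span of form monomials in $\mathcal{H}_r\Lambda^k$ with linear degree $\ge l$; $\mathcal{J}_r\Lambda^k:=\sum_{l\ge1}\kappa\,\mathcal{H}_{r+l-1,l}\Lambda^{k+1}$; and the serendipity space is $\mathcal{S}_r\Lambda^k:=\mathcal{P}_r\Lambda^k+\mathcal{J}_r\Lambda^k+d\,\mathcal{J}_{r+1}\Lambda^{k-1}$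 (forms of degree $-1$ or $n+1$ are $0$), all on $\mathbb{R}^n$. *)

(* Polynomial differential forms on R^n, represented as
   finite formal sums (lists) of coefficient * pform monomial x^alpha dx_sigma. *)
From HB Require Import structures.
From mathcomp Require Import all_boot all_order all_algebra.
Set Implicit Arguments. Unset Strict Implicit. Unset Printing Implicit Defensive.
Import Order.TTheory GRing.Theory Num.Theory.
Local Open Scope ring_scope.

Section Forms.
Variables (R : realFieldType) (n : nat).

(* A pform monomial x^alpha dx_sigma: multi-index alpha and increasing index
   set sigma (a finite set of 'I_n, listed increasingly). *)
Definition mono := ({ffun 'I_n -> nat} * {set 'I_n})%type.

Definition pform := seq (R * mono).

(* Coefficient of a monomial in a formal sum; two formal sums denote the
   same pform iff all coefficients agree. *)
Definition coef (w : pform) (m : mono) : R := \sum_(t <- w | t.2 == m) t.1.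
Definition feq (w1 w2 : pform) : Prop := forall m, coef w1 m = coef w2 m.

Definition mdeg (a : {ffun 'I_n -> nat}) : nat := (\sum_(i < n) a i)%N.
Definition addE (a : {ffun 'I_n -> nat}) (i : 'I_n) : {ffun 'I_n -> nat} :=
  [ffun j => (a j + (j == i))%N].
Definition subE (a : {ffun 'I_n -> nat}) (i : 'I_n) : {ffun 'I_n -> nat} :=
  [ffun j => (a j - (j == i))%N].

Definition ldeg (m : mono) : nat := #|[set i | (i \notin m.2) && (m.1 i == 1%N)]|.

(* sign (-1)^{#{m in s | m < i}} : position of dx_i among dx_s *)
Definition sgn (s : {set 'I_n}) (i : 'I_n) : R := (-1) ^+ #|[set j in s | (j < i)%N]|.

(* Koszul operator on a monomial:
   kappa(x^a dx_s) = sum_{p} (-1)^{p+1} x^a x_{s(p)} dx_{s \ s(p)}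
   (if i = s(p) then p = 1 + #{j in s | j < i}, so (-1)^{p+1} = sgn s i). *)
Definition kappa_mono (t : R * mono) : pform :=
  [seq (sgn t.2.2 i * t.1, (addE t.2.1 i, t.2.2 :\ i)) | i <- enum t.2.2].
Definition kappa (w : pform) : pform := flatten (map kappa_mono w).

(* Exterior derivative on a monomial:
   d(x^a dx_s) = sum_i a_i x^{a - e_i} dx_i /\ dx_s, with
   dx_i /\ dx_s = 0 if i in s, and = sgn s i * dx_{s U {i}} otherwise. *)
Definition d_mono (t : R * mono) : pform :=
  [seq (sgn t.2.2 i * (t.2.1 i)%:R * t.1, (subE t.2.1 i, i |: t.2.2))
  | i <- enum (~: t.2.2)].
Definition dext (w : pform) : pform := flatten (map d_mono w).

Definition inP (r k : nat) (w : pform) : Prop :=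
  forall m, coef w m != 0 -> (mdeg m.1 <= r)%N /\ #|m.2| = k.
Definition inHl (r l k : nat) (w : pform) : Prop :=
  forall m, coef w m != 0 -> mdeg m.1 = r /\ #|m.2| = k /\ (l <= ldeg m)%N.
(* w in J_r Lambda^k = sum_{l >= 1} kappa H_{r+l-1,l} Lambda^{k+1}
   (finite sums of elements of these subspaces) *)
Definition inJ (r k : nat) (w : pform) : Prop :=
  exists s : seq (nat * pform),
    (forall p, p \in s -> (1 <= p.1)%N /\ inHl (r + p.1 - 1) p.1 k.+1 p.2) /\
    feq w (flatten [seq kappa p.2 | p <- s]).
(* w in d J_{r+1} Lambda^{k-1}  (= 0 when k = 0, forms of degree -1 being 0) *)
Definition inDJ (r k : nat) (w : pform) : Prop :=
  match k with
  | 0 => feq w [::]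
  | k'.+1 => exists u, inJ r.+1 k' u /\ feq w (dext u)
  end.
Definition inS (r k : nat) (w : pform) : Prop :=
  exists a b c, inP r k a /\ inJ r k b /\ inDJ r k c /\ feq w (a ++ b ++ c).

End Forms.

From HB Require Import structures.
From mathcomp Require Import all_boot all_order all_algebra.
From mathcomp Require Import ring.
Import Order.TTheory GRing.Theory Num.Theory.
Local Open Scope ring_scope.

Set Implicit Arguments. Unset Strict Implicit. Unset Printing Implicit Defensive.

(* Split w = a + b + c with a in P_(r-1), b = sum kappa h in J_(r-1) and
   c = d u, u = sum_p kappa h_p in J_r with h_p in H_(r+l-1,l) Lambda^k.
   Since kappa o kappa = 0, kappa b = 0. The homotopy formula
   kappa d + d kappa = (polynomial degree + form degree), checked on monomials,
   gives kappa d kappa h_p = (r + l - 1 + k) kappa h_p, so kappa c lies in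
   J_r Lambda^(k-1); and kappa a lies in P_r since kappa raises degrees by one. *)

Section FormalSums.
Variables (R : realFieldType) (n : nat).
Local Notation pform := (pform R n).
Local Notation mono := (mono n).

Definition linext (F : R * mono -> pform) (w : pform) : pform := flatten (map F w).

Definition scale_term (c : R) (t : R * mono) : R * mono := (t.1 * c, t.2).

Definition scalable (F : R * mono -> pform) :=
  forall c x m, F (x * c, m) = map (scale_term c) (F (x, m)).

Lemma coef_nil m : coef ([::] : pform) m = 0.
Proof. by rewrite /coef big_nil. Qed.

Lemma coef_cat (w1 w2 : pform) m : coef (w1 ++ w2) m = coef w1 m + coef w2 m.
Proof. by rewrite /coef big_cat. Qed.

Lemma coef_flatten (L : seq pform) m : coef (flatten L) m = \sum_(w <- L) coef w m.
Proof.
elim: L => [|w L IH]; first by rewrite big_nil coef_nil.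
by rewrite /= coef_cat IH big_cons.
Qed.

Lemma coef_scale c (w : pform) m : coef (map (scale_term c) w) m = coef w m * c.
Proof. by rewrite /coef big_map mulr_suml. Qed.

Lemma coefE (w : pform) m : coef w m = \sum_(t <- w) t.1 * (t.2 == m)%:R.
Proof.
by rewrite /coef big_mkcond; apply: eq_bigr => t _; case: eqP; rewrite ?mulr1 ?mulr0.
Qed.

Lemma coef_linext F (w : pform) m : coef (linext F w) m = \sum_(t <- w) coef (F t) m.
Proof. by rewrite /linext coef_flatten big_map. Qed.

Lemma coef_scalable F c m' m : scalable F -> coef (F (c, m')) m = c * coef (F (1, m')) m.
Proof. by move=> sF; rewrite -{1}[c]mul1r sF coef_scale mulrC. Qed.

Lemma coef_linext_scalable F (w : pform) m : scalable F ->
  coef (linext F w) m = \sum_(t <- w) t.1 * coef (F (1, t.2)) m.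
Proof.
by move=> sF; rewrite coef_linext; apply: eq_bigr => -[x m'] _; rewrite coef_scalable.
Qed.

Lemma linext_cat F (w1 w2 : pform) : linext F (w1 ++ w2) = linext F w1 ++ linext F w2.
Proof. by rewrite /linext map_cat flatten_cat. Qed.

Lemma linext_flatten F (L : seq pform) :
  linext F (flatten L) = flatten (map (linext F) L).
Proof. by elim: L => [|w L IH] //=; rewrite linext_cat IH. Qed.

Lemma linext_comp F G (w : pform) :
  linext F (linext G w) = linext (fun t => linext F (G t)) w.
Proof. by elim: w => [|t w IH] //=; rewrite linext_cat IH. Qed.

Lemma linext_scale F c (w : pform) : scalable F ->
  linext F (map (scale_term c) w) = map (scale_term c) (linext F w).
Proof.
move=> sF; elim: w => [|[x m] w IH] //=.
by rewrite /linext /= -/(linext F _) IH sF map_cat.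
Qed.

Lemma scalable_comp F G : scalable F -> scalable G -> scalable (fun t => linext F (G t)).
Proof. by move=> sF sG c x m /=; rewrite sG linext_scale. Qed.

Lemma sum_terms_coef (w : pform) (S : seq mono) (f : mono -> R) :
  uniq S -> {subset map snd w <= S} ->
  \sum_(t <- w) t.1 * f t.2 = \sum_(m' <- S) coef w m' * f m'.
Proof.
move=> uS wS.
transitivity (\sum_(t <- w) \sum_(m' <- S | t.2 == m') t.1 * f m').
  apply: eq_big_seq => t tw; rewrite -big_filter.
  have -> : [seq m' <- S | t.2 == m'] = [:: t.2].
    rewrite -(filter_pred1_uniq uS (wS _ (map_f snd tw))).
    by apply: eq_filter => y /=; rewrite eq_sym.
  by rewrite big_seq1.
by rewrite (exchange_big_dep xpredT) //=; apply: eq_bigr => m' _; rewrite mulr_suml.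
Qed.

Lemma coef_linext_supp F (w : pform) (S : seq mono) m :
  scalable F -> uniq S -> {subset map snd w <= S} ->
  coef (linext F w) m = \sum_(m' <- S) coef w m' * coef (F (1, m')) m.
Proof.
move=> sF uS wS; rewrite coef_linext_scalable //.
exact: (sum_terms_coef (fun m' => coef (F (1, m')) m) uS wS).
Qed.

Lemma linext_feq F (w1 w2 : pform) : scalable F -> feq w1 w2 -> feq (linext F w1) (linext F w2).
Proof.
move=> sF e12 m; set S := undup (map snd (w1 ++ w2)).
have uS : uniq S by apply: undup_uniq.
rewrite !(coef_linext_supp m sF uS).
- by apply: eq_bigr => m' _; rewrite e12.
- by move=> x xw; rewrite mem_undup map_cat mem_cat xw orbT.
- by move=> x xw; rewrite mem_undup map_cat mem_cat xw.
Qed.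

Lemma coef_linext_neq0 F (w : pform) m : scalable F -> coef (linext F w) m != 0 ->
  exists m', coef w m' != 0 /\ coef (F (1, m')) m != 0.
Proof.
move=> sF; rewrite (coef_linext_supp m sF (undup_uniq (map snd w))); last first.
  by move=> x; rewrite mem_undup.
case: (boolP (has (fun m' => coef w m' * coef (F (1, m')) m != 0) (undup (map snd w)))).
  by case/hasP=> m' _; rewrite mulf_eq0 negb_or => /andP[]; exists m'.
move/hasPn=> all0; rewrite big_seq big1 ?eqxx // => m' /all0.
by rewrite negbK => /eqP.
Qed.

End FormalSums.

Section Signs.
Variables (R : realFieldType) (n : nat).

Definition count_below (s : {set 'I_n}) (i : 'I_n) : nat := #|[set j in s | (j < i)%N]|.

Lemma count_belowD1 (s : {set 'I_n}) (x y : 'I_n) :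
  count_below s y = (((x \in s) && (x < y)%N) + count_below (s :\ x) y)%N.
Proof.
rewrite /count_below (cardsD1 x [set z in s | (z < y)%N]) inE.
by congr (_ + _)%N; apply: eq_card => z; rewrite !inE andbA.
Qed.

Lemma count_belowU1 (s : {set 'I_n}) (x y : 'I_n) : x \notin s ->
  count_below (x |: s) y = ((x < y)%N + count_below s y)%N.
Proof. by move=> xS; rewrite (count_belowD1 _ x) setU11 (setU1K xS). Qed.

Lemma sgnE (s : {set 'I_n}) (i : 'I_n) : sgn R s i = (-1) ^+ count_below s i.
Proof. by []. Qed.

Lemma sign_sqr (c : nat) : ((-1) ^+ c * (-1) ^+ c : R) = 1.
Proof. by rewrite -exprD -signr_odd oddD addbb expr0. Qed.

Lemma sgnD1_swap (s : {set 'I_n}) (i j : 'I_n) : i \in s -> j \in s -> i != j ->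
  sgn R (s :\ i) j * sgn R s i = - (sgn R (s :\ j) i * sgn R s j).
Proof.
move=> iS jS /negPf nij; rewrite !sgnE (count_belowD1 s i j) (count_belowD1 s j i) iS jS /=.
case: ltngtP => [_|_|/val_inj ij] /=; last by rewrite ij eqxx in nij.
  all: by rewrite ?add0n ?add1n exprS; ring.
Qed.

Lemma sgnU1D1_swap (s : {set 'I_n}) (i j : 'I_n) : i \in s -> j \notin s ->
  sgn R (j |: s) i * sgn R s j = - (sgn R (s :\ i) j * sgn R s i).
Proof.
move=> iS jS; have /negPf nij : i != j by apply: contraNneq jS => <-.
rewrite !sgnE (count_belowU1 i jS) (count_belowD1 s i j) iS /=.
case: ltngtP => [_|_|/val_inj ij] /=; last by rewrite ij eqxx in nij.
  all: by rewrite ?add0n ?add1n exprS; ring.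
Qed.

Lemma sgnD1_self (s : {set 'I_n}) (i : 'I_n) : i \in s -> sgn R (s :\ i) i * sgn R s i = 1.
Proof. by move=> iS; rewrite !sgnE (count_belowD1 s i i) ltnn andbF add0n sign_sqr. Qed.

Lemma sgnU1_self (s : {set 'I_n}) (j : 'I_n) : j \notin s -> sgn R (j |: s) j * sgn R s j = 1.
Proof. by move=> jS; rewrite !sgnE (count_belowU1 j jS) ltnn add0n sign_sqr. Qed.

End Signs.

Lemma sum_antisym (R : numFieldType) (I : finType) (F : I -> I -> R) :
  (forall i j, F j i = - F i j) -> \sum_i \sum_j F i j = 0.
Proof.
move=> Fanti; set S := \sum_i _.
have : S = - S.
  rewrite {1}/S exchange_big /= -sumrN; apply: eq_bigr => i _.
  by rewrite -sumrN; apply: eq_bigr => j _; rewrite Fanti.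
by move/eqP; rewrite -subr_eq0 opprK -mulr2n mulrn_eq0 /= => /eqP.
Qed.

Lemma setD1C (T : finType) (s : {set T}) (i j : T) : s :\ i :\ j = s :\ j :\ i.
Proof. by rewrite !setDDl setUC. Qed.

Lemma setU1D1 (T : finType) (s : {set T}) (i j : T) : i != j -> (j |: s) :\ i = j |: (s :\ i).
Proof.
move=> nij; apply/setP => k; rewrite !inE.
by case: (eqVneq k j) => [->|kj] //=; rewrite andbT eq_sym.
Qed.

Section KoszulMonomial.
Variables (R : realFieldType) (n : nat).
Local Notation mono := (mono n).

Lemma scalable_kappa_mono : scalable (@kappa_mono R n).
Proof.
move=> c x [a s]; rewrite /kappa_mono -map_comp; apply: eq_map => i /=.
by rewrite /scale_term /= mulrA.
Qed.

Lemma scalable_d_mono : scalable (@d_mono R n).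
Proof.
move=> c x [a s]; rewrite /d_mono -map_comp; apply: eq_map => i /=.
by rewrite /scale_term /= !mulrA.
Qed.

Lemma coef_map_enum (A : {set 'I_n}) (f : 'I_n -> R) (g : 'I_n -> mono) m :
  coef [seq (f i, g i) | i <- enum A] m = \sum_(i in A | g i == m) f i.
Proof. by rewrite /coef big_map big_enum_cond. Qed.

Lemma addEC (a : {ffun 'I_n -> nat}) i j : addE (addE a i) j = addE (addE a j) i.
Proof. by apply/ffunP => k; rewrite !ffunE addnAC. Qed.

Lemma subE_addE (a : {ffun 'I_n -> nat}) (i j : 'I_n) : i != j ->
  addE (subE a j) i = subE (addE a i) j.
Proof.
move=> nij; apply/ffunP => k; rewrite !ffunE.
by case: (eqVneq k i) => [->|ki] /=; rewrite ?(negPf nij) /= ?subn0 ?addn0.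
Qed.

Lemma addE_subE (a : {ffun 'I_n -> nat}) (i : 'I_n) : (0 < a i)%N -> addE (subE a i) i = a.
Proof.
move=> ai; apply/ffunP => k; rewrite !ffunE.
by case: (eqVneq k i) => [->|ki] /=; rewrite ?subnK ?subn0 ?addn0.
Qed.

Lemma subE_addE_id (a : {ffun 'I_n -> nat}) (i : 'I_n) : subE (addE a i) i = a.
Proof. by apply/ffunP => k; rewrite !ffunE addnK. Qed.

Lemma mdeg_addE (a : {ffun 'I_n -> nat}) i : mdeg (addE a i) = (mdeg a).+1.
Proof.
rewrite /mdeg (eq_bigr (fun k => a k + (k == i))%N); last by move=> k _; rewrite ffunE.
rewrite big_split /= -addn1; congr (_ + _)%N.
by rewrite (bigD1 i) //= eqxx big1 // => k /negPf ->.
Qed.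

Lemma kappa_mono_support (t : R * mono) m : coef (kappa_mono t) m != 0 ->
  exists2 i, i \in t.2.2 & m = (addE t.2.1 i, t.2.2 :\ i).
Proof.
case: t => c [a s]; rewrite /kappa_mono coef_map_enum /=.
case: (pickP (fun i => (i \in s) && ((addE a i, s :\ i) == m))) => [i /andP[iS /eqP <-]|none].
  by exists i.
by rewrite big_pred0 ?eqxx.
Qed.

Lemma coef_kappa_kappa_mono (t : R * mono) m :
  coef (linext (@kappa_mono R n) (kappa_mono t)) m = 0.
Proof.
case: t => c [a s]; rewrite coef_linext /kappa_mono /= big_map big_enum /=.
pose F i j := if [&& i \in s, j \in s :\ i & (addE (addE a i) j, s :\ i :\ j) == m]
  then sgn R (s :\ i) j * (sgn R s i * c) else 0.
rewrite -[RHS](sum_antisym (F := F)).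
  rewrite big_mkcond; apply: eq_bigr => i _.
  case iS: (i \in s); last by rewrite big1 // => j _; rewrite /F iS.
  by rewrite coef_map_enum big_mkcond; apply: eq_bigr => j _; rewrite /F iS.
move=> i j; rewrite /F addEC setD1C !inE.
case: (eqVneq i j) => [->|nij]; first by rewrite ?eqxx /= ?andbF ?oppr0.
case iS: (i \in s); case jS: (j \in s); rewrite ?andbF ?oppr0 //=.
by case: ifP => _; rewrite ?oppr0 // !mulrA (sgnD1_swap R jS iS) ?mulNr // eq_sym.
Qed.

End KoszulMonomial.

Section HomotopyMonomial.
Variables (R : realFieldType) (n : nat).
Variables (a : {ffun 'I_n -> nat}) (s : {set 'I_n}) (m : mono n).

(* Entry (i, j): the term of kappa d (x^a dx_s), resp. d kappa (x^a dx_s), that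
   differentiates in x_j and contracts dx_i. Off the diagonal the two cancel;
   on it they add up to the Euler factor a_i + [i in s]. *)
Definition kappa_d_entry (i j : 'I_n) : R :=
  if [&& j \in ~: s, i \in j |: s & (addE (subE a j) i, (j |: s) :\ i) == m]
  then sgn R (j |: s) i * (sgn R s j * (a j)%:R) else 0.

Definition d_kappa_entry (i j : 'I_n) : R :=
  if [&& i \in s, j \in ~: (s :\ i) & (subE (addE a i) j, j |: (s :\ i)) == m]
  then sgn R (s :\ i) j * (addE a i j)%:R * sgn R s i else 0.

Lemma coef_kappa_d_mono :
  coef (linext (@kappa_mono R n) (d_mono (1, (a, s)))) m
  = \sum_i \sum_j kappa_d_entry i j.
Proof.
rewrite coef_linext /d_mono big_map big_enum /= big_mkcond [RHS]exchange_big.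
apply: eq_bigr => j _; rewrite /kappa_d_entry.
case jS: (j \in ~: s); last by rewrite big1 // => i _; rewrite jS.
rewrite coef_map_enum big_mkcond; apply: eq_bigr => i _ /=.
by rewrite mulr1.
Qed.

Lemma coef_d_kappa_mono :
  coef (linext (@d_mono R n) (kappa_mono (1, (a, s)))) m
  = \sum_i \sum_j d_kappa_entry i j.
Proof.
rewrite coef_linext /kappa_mono big_map big_enum /= big_mkcond.
apply: eq_bigr => i _; rewrite /d_kappa_entry.
case iS: (i \in s); last by rewrite big1 // => j _; rewrite iS.
rewrite coef_map_enum big_mkcond; apply: eq_bigr => j _ /=.
by rewrite mulr1.
Qed.

Lemma homotopy_entries_offdiag (i j : 'I_n) : i != j ->
  kappa_d_entry i j + d_kappa_entry i j = 0.
Proof.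
move=> nij; have /negPf nji : j != i by rewrite eq_sym.
rewrite /kappa_d_entry /d_kappa_entry !inE (negPf nij) nji /=.
rewrite (subE_addE _ nij) (setU1D1 _ nij) ffunE nji addn0.
case iS: (i \in s); case jS: (j \in s); rewrite /= ?addr0 ?add0r //.
case: ifP => _; last by rewrite addr0.
by rewrite !mulrA (sgnU1D1_swap R iS (negbT jS)); ring.
Qed.

Lemma homotopy_entries_diag (i : 'I_n) :
  kappa_d_entry i i + d_kappa_entry i i = ((a, s) == m)%:R * ((a i)%:R + (i \in s)%:R).
Proof.
rewrite /kappa_d_entry /d_kappa_entry !inE eqxx /=.
case iS: (i \in s) => /=.
  rewrite subE_addE_id (setD1K iS) ffunE eqxx add0r mulrAC (sgnD1_self R iS) mul1r.
  by case: (_ == m); rewrite ?mul1r ?mul0r // natrD.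
rewrite !addr0; case: (posnP (a i)) => [-> | ai_gt0].
  by case: ifP; rewrite ?mulr0.
rewrite (addE_subE ai_gt0) (setU1K (negbT iS)) mulrA (sgnU1_self R (negbT iS)) mul1r.
by case: (_ == m); rewrite ?mul1r ?mul0r.
Qed.

Lemma homotopy_mono :
  coef (linext (@kappa_mono R n) (d_mono (1, (a, s)))) m
  + coef (linext (@d_mono R n) (kappa_mono (1, (a, s)))) m
  = (mdeg a + #|s|)%:R * ((a, s) == m)%:R.
Proof.
rewrite coef_kappa_d_mono coef_d_kappa_mono -big_split /=.
transitivity (\sum_i ((a, s) == m)%:R * ((a i)%:R + (i \in s)%:R) : R).
  apply: eq_bigr => i _; rewrite -big_split /= (bigD1 i) //= homotopy_entries_diag.
  by rewrite big1 ?addr0 // => j ji; apply: homotopy_entries_offdiag; rewrite eq_sym.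
rewrite -mulr_sumr mulrC big_split /= natrD /mdeg natr_sum -sum1_card natr_sum.
by congr ((_ + _) * _); rewrite [RHS]big_mkcond; apply: eq_bigr => i _; case: (i \in s).
Qed.

End HomotopyMonomial.

Section Koszul.
Variables (R : realFieldType) (n : nat).
Local Notation pform := (pform R n).

Lemma kappaE (w : pform) : kappa w = linext (@kappa_mono R n) w.
Proof. by []. Qed.

Lemma dextE (w : pform) : dext w = linext (@d_mono R n) w.
Proof. by []. Qed.

Lemma kappa_feq (w1 w2 : pform) : feq w1 w2 -> feq (kappa w1) (kappa w2).
Proof. exact: linext_feq (@scalable_kappa_mono R n). Qed.

Lemma dext_feq (w1 w2 : pform) : feq w1 w2 -> feq (dext w1) (dext w2).
Proof. exact: linext_feq (@scalable_d_mono R n). Qed.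

Lemma kappa_scale c (w : pform) : kappa (map (scale_term c) w) = map (scale_term c) (kappa w).
Proof. exact: linext_scale (@scalable_kappa_mono R n). Qed.

Lemma kappa_support (w : pform) m : coef (kappa w) m != 0 ->
  exists2 m', coef w m' != 0 & exists2 i, i \in m'.2 & m = (addE m'.1 i, m'.2 :\ i).
Proof.
case/(coef_linext_neq0 (@scalable_kappa_mono R n)) => m' [wm' /kappa_mono_support km'].
by exists m'.
Qed.

Lemma kappa_kappa (w : pform) : feq (kappa (kappa w)) [::].
Proof.
move=> m; rewrite !kappaE linext_comp coef_linext coef_nil big1 // => t _.
exact: coef_kappa_kappa_mono.
Qed.

Lemma homotopy (w : pform) m :
  coef (kappa (dext w)) m + coef (dext (kappa w)) m = (mdeg m.1 + #|m.2|)%:R * coef w m.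
Proof.
have skd := scalable_comp (@scalable_kappa_mono R n) (@scalable_d_mono R n).
have sdk := scalable_comp (@scalable_d_mono R n) (@scalable_kappa_mono R n).
rewrite !kappaE !dextE !linext_comp !coef_linext_scalable // -big_split coefE mulr_sumr /=.
apply: eq_bigr => -[x [a s]] _ /=; rewrite -mulrDr homotopy_mono.
by case: eqP => [<-|_]; rewrite ?mulr0 //=; ring.
Qed.

Lemma kappa_dext_kappa (h : pform) (N : nat) :
  (forall m, coef h m != 0 -> (mdeg m.1 + #|m.2|)%N = N) ->
  feq (kappa (dext (kappa h))) (kappa (map (scale_term N%:R) h)).
Proof.
move=> hN m; rewrite kappa_scale coef_scale.
have /eqP := homotopy (kappa h) m.
rewrite (dext_feq (kappa_kappa h) m) /dext /= coef_nil addr0 => /eqP ->.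
case: (eqVneq (coef (kappa h) m) 0) => [->|/kappa_support [m' /hN <- [i iS ->]]].
  by rewrite !mulr0 mul0r.
by rewrite mulrC /= mdeg_addE (cardsD1 i m'.2) iS addSnnS.
Qed.

End Koszul.

Section Serendipity.
Variables (R : realFieldType) (n : nat).
Local Notation pform := (pform R n).

Lemma kappa_inP r k (w : pform) : inP r k.+1 w -> inP r.+1 k (kappa w).
Proof.
move=> wP m /kappa_support [m' /wP [deg card] [i iS ->]] /=.
split; first by rewrite mdeg_addE.
by move: card; rewrite (cardsD1 i m'.2) iS => -[].
Qed.

Lemma inDJ_nil r k : inDJ r k ([::] : pform).
Proof.
case: k => [|k] //=; exists [::]; split=> //.
by exists [::]; split=> // p; rewrite in_nil.
Qed.

Lemma kappa_inJ r k (w : pform) : inJ r k w -> feq (kappa w) [::].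
Proof.
case=> s [_ ew] m; rewrite (kappa_feq ew m) kappaE linext_flatten coef_flatten !big_map.
by rewrite big1 ?coef_nil // => p _; rewrite (kappa_kappa p.2 m) coef_nil.
Qed.

Lemma kappa_dext_inJ r k (w : pform) : inJ r k w -> inJ r k (kappa (dext w)).
Proof.
case=> s [sH ew].
pose N (p : nat * pform) := (r + p.1 - 1 + k.+1)%N.
exists [seq (p.1, map (scale_term (N p)%:R) p.2) | p <- s]; split.
  move=> _ /mapP [p ps ->] /=; have [p1 pH] := sH p ps; split=> // m.
  by rewrite coef_scale mulf_eq0 negb_or => /andP[/pH].
move=> m; rewrite (kappa_feq (dext_feq ew) m) !kappaE dextE.
rewrite !linext_flatten !coef_flatten -!map_comp !big_map.
apply: eq_big_seq => p ps /=; rewrite -!kappaE -dextE.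
have [_ pH] := sH p ps; apply: kappa_dext_kappa => m' /pH [-> [-> _]].
by rewrite /N.
Qed.

End Serendipity.

Theorem mainTheorem13 (R : realFieldType) (n r k : nat) :
  (1 <= n)%N -> (1 <= r)%N -> (1 <= k <= n)%N ->
  forall w : pform R n, inS (r - 1) k w -> inS r (k - 1) (kappa w).
Proof.
move=> _ r_gt0 /andP[k_gt0 _] w [a [b [c [aP [bJ [cDJ ew]]]]]].
case: k k_gt0 aP bJ cDJ ew => [//|k] _ aP bJ cDJ ew.
have -> : (k.+1 - 1 = k)%N by rewrite subn1.
have r1 : (r - 1).+1 = r by rewrite subn1 prednK.
case: cDJ => u; rewrite /= r1 => -[uJ ec].
exists (kappa a), (kappa (dext u)), [::]; split; last split; last split.
- by rewrite -r1; apply: kappa_inP.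
- exact: kappa_dext_inJ.
- exact: inDJ_nil.
move=> m; rewrite (kappa_feq ew m) kappaE !linext_cat !coef_cat -!kappaE.
rewrite (kappa_inJ bJ m) (kappa_feq ec m) coef_nil; ring.
Qed.
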